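(* Let $X,Y$ be finite nonempty sets, $A\in\{0,1\}^{X\times Y}$, $\delta,\epsilon>0$, integers $k,\ell\ge1$, and let $\mathcal S,\mathcal T$ be $(\epsilon,\delta)$-oblivious samplers of $X$ and $Y$, respectively. Then $$\Big|\|A\|_{U(k,\ell)}^{k\ell}-\mathbb{E}_{S\in\mathcal S,\,T\in\mathcal T}\|A[S,T]\|_{U(k,\ell)}^{k\ell}\Big|\le 2\epsilon k+2\epsilon\ell+2\delta.$$
   Context: An $(\epsilon,\delta)$-oblivious sampler of a finite set $X$ is a finite nonempty family $\mathcal S$ of nonempty subsets $S\subseteq X$ such that for every function $f:X\to[0,1]$, $\Pr_{S\in\mathcal S}\big[|\mathbb{E}_{x\in X}f(x)-\mathbb{E}_{x\in S}f(x)|\le\epsilon\big]\ge1-\delta$, where $S$ is uniform over $\mathcal S$ and $\mathbb E_{x\in S}$ is the uniform average over $S$. $A[S,T]$ is the submatrix with rows $S$ and columns $T$. The $(k,\ell)$-grid norm of $M\in\mathbb{R}_{\ge0}^{X'\times Y'}$ is $\|M\|_{U(k,\ell)}=\big(\mathbb{E}_{x_1,\dots,x_k\in X',\,y_1,\dots,y_\ell\in Y'}\prod_{i,j}M(x_i,y_j)\big)^{1/(k\ell)}$. *)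

From mathcomp Require Import all_boot all_order all_algebra.
From mathcomp Require Import reals.
Set Implicit Arguments. Unset Strict Implicit. Unset Printing Implicit Defensive.
Import Order.TTheory GRing.Theory Num.Theory.
Local Open Scope ring_scope.

Definition avg (R : realType) (X : finType) (S : {set X}) (f : X -> R) : R :=
  (\sum_(x in S) f x) / #|S|%:R.

(* An (eps,delta)-oblivious sampler of X: a finite nonempty family (indexed by
   a finType I, repetitions allowed, uniform over I) of nonempty subsets. *)
Definition oblivious_sampler (R : realType) (X I : finType)
    (eps delta : R) (S : I -> {set X}) : Prop :=
  [/\ (0 < #|I|)%N,
      (forall i, S i != set0) &
      forall f : X -> R, (forall x, 0 <= f x <= 1) ->
        1 - delta <=
        #|[set i | `|avg [set: X] f - avg (S i) f| <= eps]|%:R / #|I|%:R ].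

(* ||A[S,T]||_{U(k,l)}^{k l}: the expectation over x_1..x_k in S and
   y_1..y_l in T of prod_{i,j} A(x_i,y_j), for a 0/1 matrix A. *)
Definition grid_pow (R : realType) (X Y : finType) (A : X -> Y -> bool)
    (k l : nat) (S : {set X}) (T : {set Y}) : R :=
  (\sum_(x : {ffun 'I_k -> X} | [forall i, x i \in S])
     \sum_(y : {ffun 'I_l -> Y} | [forall j, y j \in T])
        \prod_(i < k) \prod_(j < l) ((A (x i) (y j))%:R : R))
  / (#|S| ^ k * #|T| ^ l)%:R.

From mathcomp Require Import all_boot all_order all_algebra.
From mathcomp Require Import reals ring lra.

Set Implicit Arguments.
Unset Strict Implicit.
Unset Printing Implicit Defensive.
Import Order.TTheory GRing.Theory Num.Theory.
Local Open Scope ring_scope.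

(* Fixing the column tuple y, the k-fold row sum factors, so ||A[S,T]||^{kl}
   is the mean over y in T^l of (avg_{x in S} prod_j A(x, y_j))^k.  For each y
   the sampler property of S moves the inner average by at most eps with
   probability 1 - delta, and t |-> t^k is k-Lipschitz on [0,1]; this costs
   k eps + delta.  Transposing A handles the columns, costing l eps + delta. *)

Section Sampling.

Variable R : realType.

Definition tuples_in {X : finType} (n : nat) (S : {set X}) :
    {set {ffun 'I_n -> X}} :=
  [set x : {ffun 'I_n -> X} | [forall i, x i \in S]].

Lemma card_tuples_in (X : finType) (n : nat) (S : {set X}) :
  #|tuples_in n S| = (#|S| ^ n)%N.
Proof.
have := card_ffun_on 'I_n S; rewrite card_ord => <-.
by rewrite cardsE; apply: eq_card => x; rewrite !inE.
Qed.

Lemma sum_tuples_in_prod (X : finType) (n : nat) (S : {set X}) (H : X -> R) :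
  \sum_(x in tuples_in n S) \prod_(i < n) H (x i) = (\sum_(x in S) H x) ^+ n.
Proof.
rewrite -[n in RHS]card_ord -prodr_const.
under [RHS]eq_bigr do rewrite big_mkcond.
rewrite bigA_distr_bigA big_mkcond /=; apply: eq_bigr => x _.
rewrite inE; have [/forallP xS | /forallPn [i /negbTE xNS]] := boolP [forall i, x i \in S].
  by apply: eq_bigr => i _; rewrite xS.
by rewrite (bigD1 i) //= xNS mul0r.
Qed.

Lemma avg_in01 (X : finType) (S : {set X}) (f : X -> R) :
  (forall x, 0 <= f x <= 1) -> 0 <= avg S f <= 1.
Proof.
move=> f01; rewrite /avg.
have sum_ge0 : 0 <= \sum_(x in S) f x by apply: sumr_ge0 => x _; case/andP: (f01 x).
have [-> | S_gt0] := posnP #|S|; first by rewrite invr0 mulr0 lexx ler01.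
rewrite divr_ge0 //= ler_pdivrMr ?ltr0n // mul1r -sum1_card natr_sum.
by apply: ler_sum => x _; case/andP: (f01 x).
Qed.

Lemma norm_subX_le (a b : R) (n : nat) :
  0 <= a <= 1 -> 0 <= b <= 1 -> `|a ^+ n - b ^+ n| <= n%:R * `|a - b|.
Proof.
move=> /andP[a_ge0 a_le1] /andP[b_ge0 b_le1].
elim: n => [|n IHn]; first by rewrite !expr0 subrr normr0 mul0r.
have -> : a ^+ n.+1 - b ^+ n.+1 = a * (a ^+ n - b ^+ n) + (a - b) * b ^+ n.
  by rewrite !exprS; ring.
apply: le_trans (ler_normD _ _) _.
rewrite !normrM (ger0_norm a_ge0) (ger0_norm (exprn_ge0 n b_ge0)) -natr1 mulrDl mul1r.
apply: lerD; first exact: le_trans (ler_piMl _ _) IHn.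
by rewrite ler_piMr // exprn_ile1.
Qed.

Lemma norm_sub_le1 (u v : R) : 0 <= u <= 1 -> 0 <= v <= 1 -> `|u - v| <= 1.
Proof. by move=> /andP[? ?] /andP[? ?]; rewrite ler_norml; apply/andP; split; lra. Qed.

Lemma ler_norm_mean (I : finType) (G : {set I}) (F : I -> R) (c : R) :
  0 <= c -> {in G, forall i, `|F i| <= c} ->
  `|(\sum_(i in G) F i) / #|G|%:R| <= c.
Proof.
move=> c_ge0 FG; have [G0 | G_gt0] := posnP #|G|.
  by rewrite G0 invr0 mulr0 normr0.
rewrite normrM [`|_^-1|]ger0_norm ?invr_ge0 // mulrC ler_pdivrMl ?ltr0n //.
apply: le_trans (ler_norm_sum _ _ _) _.
by rewrite -sum1_card natr_sum mulr_suml; apply: ler_sum => i /FG; rewrite mul1r.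
Qed.

(* The good indices G contribute at most c each, the at most delta |I| bad ones
   at most 1 each. *)
Lemma ler_norm_mean_split (I : finType) (G : {set I}) (F : I -> R) (c delta : R) :
  (0 < #|I|)%N -> 0 <= c ->
  {in G, forall i, `|F i| <= c} -> (forall i, `|F i| <= 1) ->
  1 - delta <= #|G|%:R / #|I|%:R ->
  `|(\sum_i F i) / #|I|%:R| <= c + delta.
Proof.
move=> I_gt0 c_ge0 FG F1 G_large.
have In_gt0 : 0 < #|I|%:R :> R by rewrite ltr0n.
rewrite normrM [`|_^-1|]gtr0_norm ?invr_gt0 // mulrC ler_pdivrMl //.
apply: le_trans (ler_norm_sum _ _ _) _.
rewrite (bigID (mem G)) /= -(eq_bigl _ _ (fun i => in_setC i G)).
have sumG : \sum_(i in G) `|F i| <= #|G|%:R * c.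
  by rewrite -sum1_card natr_sum mulr_suml; apply: ler_sum => i /FG; rewrite mul1r.
have sumNG : \sum_(i in ~: G) `|F i| <= #|I|%:R - #|G|%:R.
  rewrite -natrB ?max_card // -(cardsC G) addKn -sum1_card natr_sum.
  by apply: ler_sum => i _.
have GI : #|G|%:R <= #|I|%:R :> R by rewrite ler_nat max_card.
move: G_large; rewrite ler_pdivlMr // mulrBl mul1r => G_large.
have : #|G|%:R * c <= #|I|%:R * c by rewrite ler_wpM2r.
nra.
Qed.

Lemma oblivious_sampler_avgX (X I : finType) (eps delta : R)
    (S : I -> {set X}) (k : nat) (f : X -> R) :
  oblivious_sampler eps delta S -> 0 <= eps -> (forall x, 0 <= f x <= 1) ->
  `|avg [set: X] f ^+ k - (\sum_i avg (S i) f ^+ k) / #|I|%:R|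
    <= k%:R * eps + delta.
Proof.
case=> I_gt0 _ sampler eps_ge0 f01.
set a := avg [set: X] f; have a01 : 0 <= a <= 1 by exact: avg_in01.
have -> : a ^+ k - (\sum_i avg (S i) f ^+ k) / #|I|%:R
    = (\sum_i (a ^+ k - avg (S i) f ^+ k)) / #|I|%:R.
  rewrite sumrB sumr_const mulrBl -[a ^+ k *+ _]mulr_natr mulfK // pnatr_eq0 -lt0n.
  exact: I_gt0.
apply: (ler_norm_mean_split I_gt0 _ _ _ (sampler f f01)); first exact: mulr_ge0.
  move=> i; rewrite inE => close.
  by apply: le_trans (norm_subX_le _ a01 (avg_in01 _ f01)) _; rewrite ler_wpM2l.
move=> i; have /andP[b_ge0 b_le1] := avg_in01 (S i) f01; case/andP: a01 => a_ge0 a_le1.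
by apply: norm_sub_le1; rewrite exprn_ge0 ?exprn_ile1.
Qed.

Variables (X Y : finType) (A : X -> Y -> bool).

Lemma grid_powE (k l : nat) (S : {set X}) (T : {set Y}) :
  grid_pow R A k l S T =
  (\sum_(y in tuples_in l T) avg S (fun x => \prod_(j < l) (A x (y j))%:R) ^+ k)
  / #|tuples_in l T|%:R.
Proof.
rewrite /grid_pow card_tuples_in exchange_big /=.
rewrite natrM invfM mulrA mulr_suml; congr (_ * _).
apply: eq_big => [y | y _]; first by rewrite inE.
rewrite /avg expr_div_n natrX -sum_tuples_in_prod; congr (_ / _).
by apply: eq_bigl => x; rewrite inE.
Qed.

Lemma grid_pow_tr (k l : nat) (S : {set X}) (T : {set Y}) :
  grid_pow R A k l S T = grid_pow R (fun y x => A x y) l k T S.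
Proof.
rewrite /grid_pow exchange_big mulnC; congr (_ / _).
by apply: eq_bigr => y _; apply: eq_bigr => x _; exact: exchange_big.
Qed.

Lemma grid_pow_sample_rows (I : finType) (eps delta : R) (k l : nat)
    (S : I -> {set X}) (T : {set Y}) :
  oblivious_sampler eps delta S -> 0 <= eps -> 0 <= delta ->
  `|grid_pow R A k l [set: X] T - (\sum_i grid_pow R A k l (S i) T) / #|I|%:R|
    <= k%:R * eps + delta.
Proof.
move=> sampler eps_ge0 delta_ge0.
under eq_bigr do rewrite grid_powE.
rewrite grid_powE -!mulr_suml exchange_big /= mulrAC -mulrBl mulr_suml -sumrB.
apply: ler_norm_mean => [|y _]; first by rewrite addr_ge0 ?mulr_ge0.
apply: oblivious_sampler_avgX => // x.
by rewrite prodr_ge0 ?prodr_ile1 // => j _; case: (A x (y j)); rewrite ?lexx ?ler01.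
Qed.

End Sampling.

Theorem lemma4p7 (R : realType) (X Y I J : finType)
    (A : X -> Y -> bool) (delta eps : R) (k l : nat)
    (S : I -> {set X}) (T : J -> {set Y}) :
  (0 < #|X|)%N -> (0 < #|Y|)%N ->
  0 < delta -> 0 < eps -> (1 <= k)%N -> (1 <= l)%N ->
  oblivious_sampler eps delta S -> oblivious_sampler eps delta T ->
  `| grid_pow R A k l [set: X] [set: Y]
     - (\sum_(i : I) \sum_(j : J) grid_pow R A k l (S i) (T j))
       / (#|I| * #|J|)%:R |
  <= 2 * eps * k%:R + 2 * eps * l%:R + 2 * delta.
Proof.
move=> _ _ /ltW delta_ge0 /ltW eps_ge0 _ _ samplerS samplerT.
set G := grid_pow R A k l [set: X] [set: Y].
set M := fun i => grid_pow R A k l (S i) [set: Y].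
set N := fun i => (\sum_j grid_pow R A k l (S i) (T j)) / #|J|%:R.
have rows : `|G - (\sum_i M i) / #|I|%:R| <= k%:R * eps + delta.
  exact: grid_pow_sample_rows.
have cols i : `|M i - N i| <= l%:R * eps + delta.
  rewrite /M /N grid_pow_tr; under eq_bigr do rewrite grid_pow_tr.
  exact: grid_pow_sample_rows.
have mean_cols : `|(\sum_i (M i - N i)) / #|I|%:R| <= l%:R * eps + delta.
  rewrite -cardsT -(eq_bigl _ _ (in_setT (T := I))).
  by apply: ler_norm_mean => [|i _]; rewrite ?addr_ge0 ?mulr_ge0.
have -> : G - (\sum_i \sum_j grid_pow R A k l (S i) (T j)) / (#|I| * #|J|)%:R
    = (G - (\sum_i M i) / #|I|%:R) + (\sum_i (M i - N i)) / #|I|%:R.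
  rewrite sumrB /N -mulr_suml natrM invfM; ring.
apply: le_trans (ler_normD _ _) (le_trans (lerD rows mean_cols) _).
have : 0 <= k%:R * eps /\ 0 <= l%:R * eps by split; apply: mulr_ge0.
lra.
Qed.
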